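(* Let $\Omega\subset\mathbb{R}^N$ be a bounded domain and $j\in\{1,\dots,N\}$. There exist constants $\mu>0$ depending only on $\Omega$ and $C>0$ independent of $\varepsilon$ such that for every $0<\varepsilon<1$, every $x_0\in\Omega$ and every $t>0$: for any strategies $S_I,S_{II}$ of the parabolic game started at $(x_0,t)$, \[ \mathbb{P}^{x_0,t}_{S_I,S_{II}}[t_\tau\le0]\le Ce^{-\mu t}, \] and for any strategies $\tilde S_I,\tilde S_{II}$ of the elliptic game started at $x_0$, \[ \mathbb{P}^{x_0}_{\tilde S_I,\tilde S_{II}}\Big[\tfrac{\varepsilon^2\tau}{2}\ge t\Big]\le Ce^{-\mu t}, \] where $\tau$ denotes the number of steps until the respective game ends.
   Context: Parabolic game (step size $\varepsilon$): a token at $(x_k,t_k)$, $x_k\in\Omega$, $t_k>0$; Player I chooses a $j$-dimensional linear subspace $S\subset\mathbb{R}^N$, Player II chooses a unit vector $v\in S$, and the token moves to $(x_k+\varepsilon v,t_k-\varepsilon^2/2)$ or $(x_k-\varepsilon v,t_k-\varepsilon^2/2)$ with probability $1/2$ each; the game ends at the first step $\tau$ at which $x_\tau\notin\Omega$ or $t_\tau\le0$. Elliptic game: the same dynamics on positions only ($x_{k+1}=x_k\pm\varepsilon v$ with probability $1/2$ each), ending at the first step $\tau$ with $x_\tau\notin\Omega$, with no time constraint. Strategies are measurable functions of the history of positions (and, for Player II, of the current subspace $S$); $\mathbb{P}$ denotes the induced probability on game sequences. *)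

From mathcomp Require Import all_boot.
From Stdlib Require Import Reals ClassicalEpsilon.
Set Implicit Arguments.
Unset Strict Implicit.

Local Open Scope R_scope.

Definition vec (N : nat) := 'I_N -> R.

Definition vadd N (x y : vec N) : vec N := fun i => x i + y i.
Definition vscale N (a : R) (x : vec N) : vec N := fun i => a * x i.
Definition vnorm N (x : vec N) : R := sqrt (\big[Rplus/0]_(i < N) (x i * x i)).
Definition vdist N (x y : vec N) : R := vnorm (fun i => x i - y i).

Definition is_open N (U : vec N -> Prop) : Prop :=
  forall x, U x -> exists r, 0 < r /\ forall y, vdist x y < r -> U y.
Definition is_connected N (O : vec N -> Prop) : Prop :=
  forall U V : vec N -> Prop, is_open U -> is_open V ->
    (forall x, O x -> U x \/ V x) ->
    (exists x, O x /\ U x) -> (exists x, O x /\ V x) ->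
    exists x, O x /\ U x /\ V x.
Definition is_bounded N (O : vec N -> Prop) : Prop :=
  exists M, forall x, O x -> vnorm x <= M.
Definition bounded_domain N (O : vec N -> Prop) : Prop :=
  (exists x, O x) /\ is_open O /\ is_connected O /\ is_bounded O.

Definition lincomb N j (c : 'I_j -> R) (b : 'I_j -> vec N) : vec N :=
  fun i => \big[Rplus/0]_(k < j) (c k * b k i).
Definition is_subspace N (j : nat) (S : vec N -> Prop) : Prop :=
  exists b : 'I_j -> vec N,
    (forall c : 'I_j -> R, (forall i, lincomb c b i = 0) -> forall k, c k = 0) /\
    (forall v, S v <-> exists c : 'I_j -> R, forall i, v i = lincomb c b i).

(* Histories are lists with
   the most recent state first. *)
Definition valid_strategies N (j : nat) (H : Type)
  (SI : list H -> (vec N -> Prop)) (SII : list H -> (vec N -> Prop) -> vec N) : Prop :=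
  (forall h, is_subspace j (SI h)) /\
  (forall h S, is_subspace j S -> S (SII h S) /\ vnorm (SII h S) = 1).

(* Parabolic game: history entries are (position, time). [coin k = true]
   means the k-th move is +eps v, false means -eps v.
   [par_hist ... k] is the history (x_k,t_k) :: ... :: (x_0,t_0). *)
Fixpoint par_hist N (eps : R) (SI : list (vec N * R) -> (vec N -> Prop))
  (SII : list (vec N * R) -> (vec N -> Prop) -> vec N)
  (x0 : vec N) (t0 : R) (coin : nat -> bool) (k : nat) : list (vec N * R) :=
  match k with
  | O => [:: (x0, t0)]
  | S k' =>
      let h := par_hist eps SI SII x0 t0 coin k' in
      let cur := head (x0, t0) h in
      let v := SII h (SI h) in
      (vadd cur.1 (vscale (if coin k' then eps else - eps) v), cur.2 - eps ^ 2 / 2) :: h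
  end.

Definition par_state N eps SI SII (x0 : vec N) t0 coin k : vec N * R :=
  head (x0, t0) (par_hist eps SI SII x0 t0 coin k).

Fixpoint ell_hist N (eps : R) (SI : list (vec N) -> (vec N -> Prop))
  (SII : list (vec N) -> (vec N -> Prop) -> vec N)
  (x0 : vec N) (coin : nat -> bool) (k : nat) : list (vec N) :=
  match k with
  | O => [:: x0]
  | S k' =>
      let h := ell_hist eps SI SII x0 coin k' in
      let cur := head x0 h in
      let v := SII h (SI h) in
      vadd cur (vscale (if coin k' then eps else - eps) v) :: h
  end.

Definition ell_pos N eps SI SII (x0 : vec N) coin k : vec N :=
  head x0 (ell_hist eps SI SII x0 coin k).

(* Probability, under fair independent coins, of an event E that depends
   only on the first m coin flips: (1/2)^m * #{coin sequences of length m in E}. *)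
Definition indicator (P : Prop) : R :=
  if excluded_middle_informative P then 1 else 0.
Definition prob_first (m : nat) (E : (nat -> bool) -> Prop) : R :=
  \big[Rplus/0]_(b : m.-tuple bool)
     ((/ 2) ^ m * indicator (E (fun i => nth false b i))).

(* A number of steps after which both events below are determined:
   Z.to_nat (up (2 t / eps^2)) > 2 t / eps^2. *)
Definition horizon (eps t : R) : nat := Z.to_nat (up (2 * t / eps ^ 2)).

(* Parabolic event {t_tau <= 0}: no state (x_i,t_i) with t_i > 0 lies
   outside Omega (t is decreasing, so this is exactly t_tau <= 0). *)
Definition par_time_out N (O : vec N -> Prop) eps SI SII x0 t0 (coin : nat -> bool) : Prop :=
  forall i, 0 < (par_state eps SI SII x0 t0 coin i).2 ->
            O (par_state eps SI SII x0 t0 coin i).1.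

(* Elliptic event {eps^2 tau / 2 >= t}: every x_i with eps^2 i / 2 < t is in
   Omega (tau = +infinity if the game never ends). *)
Definition ell_long N (O : vec N -> Prop) eps SI SII x0 (t : R) (coin : nat -> bool) : Prop :=
  forall i : nat, eps ^ 2 * INR i / 2 < t -> O (ell_pos eps SI SII x0 coin i).

From HB Require Import structures.
From mathcomp Require Import all_boot.
From mathcomp Require Import zify.
From Stdlib Require Import ZArith Reals Lra Psatz ClassicalEpsilon FunctionalExtensionality PropExtensionality.
Set Implicit Arguments.
Unset Strict Implicit.
Local Open Scope R_scope.

(* Both games drive a walk x_{k+1} = x_k +- eps v_k with a unit
   vector v_k chosen from the history and a fair coin for the sign, so that
   E[|x_{k+1}|^2 | past] = |x_k|^2 + eps^2.  If Omega lies in the ball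
   |x|^2 <= Q and A = 4Q + 4, the process
       W_k = 1{x_0, ..., x_{k-1} in Omega} * exp(eps^2 k / A) * (A - |x_k|^2)
   is a nonnegative supermartingale, because exp(eps^2/A) (g - eps^2) <= g for
   0 <= g <= A.  Hence E[W_K] <= W_0 <= A, and since A - |x_K|^2 >= A/2 on
   the survival event, P[the walk stays in Omega for K steps] decays like
   2 exp(-eps^2 K / A).  Both events of the theorem force the walk to stay in
   Omega during (horizon - 1) steps, i.e. about 2t/eps^2 steps, which gives
   the bound C exp(-mu t) with mu = 2/A and C = 2 exp(1/A). *)

HB.instance Definition _ :=
  Monoid.isComLaw.Build R 0 Rplus (fun a b c => esym (Rplus_assoc a b c))
    Rplus_comm Rplus_0_l.

Lemma big_Rmult_l (T : finType) (a : R) (f : T -> R) :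
  \big[Rplus/0]_(i : T) (a * f i) = a * \big[Rplus/0]_(i : T) f i.
Proof. by rewrite (big_endo (fun x => a * x) (Rmult_plus_distr_l a) (Rmult_0_r a)). Qed.

Lemma indicator_true (P : Prop) : P -> indicator P = 1.
Proof. by rewrite /indicator; case: excluded_middle_informative. Qed.

Lemma indicator_false (P : Prop) : ~ P -> indicator P = 0.
Proof. by rewrite /indicator; case: excluded_middle_informative. Qed.

Lemma indicator_ge0 (P : Prop) : 0 <= indicator P.
Proof. by rewrite /indicator; case: excluded_middle_informative => _ /=; lra. Qed.

Lemma indicator_le (P P' : Prop) : (P -> P') -> indicator P <= indicator P'.
Proof.
move=> imp; case: (classic P) => [holds | fails]; last first.
  by rewrite indicator_false //; apply: indicator_ge0.
by rewrite !indicator_true //; [lra | apply: imp].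
Qed.

Definition ccons (b : bool) (c : nat -> bool) : nat -> bool :=
  fun i => match i with O => b | S i' => c i' end.

Definition upd (c : nat -> bool) (m : nat) (s : bool) : nat -> bool :=
  fun i => if i == m then s else c i.

Fixpoint Ecoin (m : nat) (F : (nat -> bool) -> R) : R :=
  match m with
  | O => F (fun _ => false)
  | S m' => / 2 * (Ecoin m' (fun c => F (ccons true c)) +
                   Ecoin m' (fun c => F (ccons false c)))
  end.

Lemma Ecoin_ext m F G : (forall c, F c = G c) -> Ecoin m F = Ecoin m G.
Proof.
elim: m F G => [|m IH] F G FG /=; first exact: FG.
by congr (_ * (_ + _)); apply: IH => c; apply: FG.
Qed.

Lemma Ecoin_mono m F G : (forall c, F c <= G c) -> Ecoin m F <= Ecoin m G.
Proof.
elim: m F G => [|m IH] F G FG /=; first exact: FG.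
apply: Rmult_le_compat_l; first lra.
by apply: Rplus_le_compat; apply: IH => c; apply: FG.
Qed.

Lemma Ecoin_scale m a F : Ecoin m (fun c => a * F c) = a * Ecoin m F.
Proof.
elim: m a F => [|m IH] a F //=.
rewrite (IH a (fun c => F (ccons true c))) (IH a (fun c => F (ccons false c))); ring.
Qed.

Lemma Ecoin_tuples m F :
  \big[Rplus/0]_(b : m.-tuple bool) ((/ 2) ^ m * F (fun i => nth false b i)) = Ecoin m F.
Proof.
elim: m F => [|m IH] F.
  rewrite (eq_bigr (fun _ => F (fun _ => false))); last first.
    move=> b _; rewrite (tuple0 b) /= Rmult_1_l; f_equal.
    by apply: functional_extensionality => -[].
  by rewrite big_const card_tuple /= Rplus_0_r.
rewrite (reindex (fun p : bool * m.-tuple bool => [tuple of p.1 :: p.2])); last first.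
  exists (fun t : m.+1.-tuple bool => (thead t, [tuple of behead t])).
    by move=> [b t] _ /=; rewrite theadE; congr pair; apply: val_inj.
  by move=> t _ /=; rewrite [in RHS](tuple_eta t).
rewrite -(pair_big xpredT xpredT (fun b (t : m.-tuple bool) =>
   (/ 2) ^ m.+1 * F (fun i => nth false [tuple of b :: t] i))) /= big_bool /=.
rewrite -(IH (fun c => F (ccons true c))) -(IH (fun c => F (ccons false c))).
rewrite Rmult_plus_distr_l -!big_Rmult_l.
have nth_cons b (t : m.-tuple bool) :
    (fun i => nth false (b :: t) i) = ccons b (fun i => nth false t i).
  by apply: functional_extensionality => -[|i].
by congr (_ + _); apply: eq_bigr => t _; rewrite nth_cons; ring.
Qed.

Lemma prob_first_Ecoin m (E : (nat -> bool) -> Prop) :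
  prob_first m E = Ecoin m (fun c => indicator (E c)).
Proof. exact: (Ecoin_tuples m (fun c => indicator (E c))). Qed.

Lemma ccons_upd b c m s : upd (ccons b c) m.+1 s = ccons b (upd c m s).
Proof. by apply: functional_extensionality => -[|i]. Qed.

(* Conditioning on the last coin: the tower property for the filtration of
   the coins. *)
Lemma Ecoin_last m F :
  Ecoin m.+1 F = Ecoin m (fun c => / 2 * (F (upd c m true) + F (upd c m false))).
Proof.
elim: m F => [|m IH] F.
  have upd0 b : ccons b (fun _ => false) = upd (fun _ => false) 0 b.
    by apply: functional_extensionality => -[|i].
  by rewrite /= !upd0.
set G := fun c => / 2 * (F (upd c m.+1 true) + F (upd c m.+1 false)).
change (/ 2 * (Ecoin m.+1 (fun c => F (ccons true c)) +
               Ecoin m.+1 (fun c => F (ccons false c))) =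
        / 2 * (Ecoin m (fun c => G (ccons true c)) + Ecoin m (fun c => G (ccons false c)))).
rewrite !IH.
by congr (_ * (_ + _)); apply: Ecoin_ext => c; rewrite /G !ccons_upd.
Qed.

Definition determined (m : nat) (F : (nat -> bool) -> R) : Prop :=
  forall c c', (forall i, (i < m)%nat -> c i = c' i) -> F c = F c'.

Lemma Ecoin_determined m k F : determined m F -> Ecoin (m + k) F = Ecoin m F.
Proof.
move=> detF; elim: k => [|k IH]; first by rewrite addn0.
have upd_same c s : F (upd c (m + k) s) = F c.
  by apply: detF => i lt_im; rewrite /upd; case: eqP => // eq_i; lia.
by rewrite addnS Ecoin_last -IH; apply: Ecoin_ext => c; rewrite !upd_same; field.
Qed.

Lemma Ecoin_supermartingale (W : nat -> (nat -> bool) -> R) :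
  (forall m c, / 2 * (W m.+1 (upd c m true) + W m.+1 (upd c m false)) <= W m c) ->
  forall m, Ecoin m (W m) <= W 0%nat (fun _ => false).
Proof.
move=> superW; elim=> [|m IH]; first by apply: Rle_refl.
by rewrite Ecoin_last; apply: Rle_trans IH; apply: Ecoin_mono => c; apply: superW.
Qed.

Definition sq N (x : vec N) : R := \big[Rplus/0]_(i < N) (x i * x i).

Lemma sq_nonneg N (x : vec N) : 0 <= sq x.
Proof.
rewrite /sq; apply: (big_ind (fun y => 0 <= y)); [lra | move=> a b; lra | move=> i _; nra].
Qed.

Lemma vnorm_sq N (x : vec N) : vnorm x ^ 2 = sq x.
Proof. by rewrite /vnorm /= Rmult_1_r sqrt_sqrt //; apply: sq_nonneg. Qed.

Lemma sq_pm N (x v : vec N) a :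
  sq (vadd x (vscale a v)) + sq (vadd x (vscale (- a) v)) = 2 * sq x + 2 * a ^ 2 * sq v.
Proof.
rewrite /sq -big_split -!big_Rmult_l -big_split /=.
by apply: eq_bigr => i _; rewrite /vadd /vscale; ring.
Qed.

Lemma sq_step N (x v : vec N) (b : bool) a :
  sq (vadd x (vscale (if b then a else - a) v)) <= 2 * sq x + 2 * a ^ 2 * sq v.
Proof.
have := sq_pm x v a; have := sq_nonneg (vadd x (vscale a v)).
have := sq_nonneg (vadd x (vscale (- a) v)).
by case: b => /=; lra.
Qed.

(* The scalar inequality behind the supermartingale property:
   exp(d/A) (g - d) <= g for 0 <= g <= A, from exp(-u) >= 1 - u. *)
Lemma exp_drift_le (A g d : R) :
  0 < A -> 0 <= d -> 0 <= g -> g <= A -> exp (d / A) * (g - d) <= g.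
Proof.
move=> A_gt0 d_ge0 g_ge0 g_leA.
set u := d / A.
have u_ge0 : 0 <= u by apply: Rmult_le_pos; [lra | apply: Rlt_le; apply: Rinv_0_lt_compat].
have uA : u * A = d by rewrite /u; field; lra.
have exp_lin : g * (1 - u) <= g * exp (- u).
  by apply: Rmult_le_compat_l => //; have := exp_ineq1_le (- u); lra.
have lower : g - d <= g * exp (- u) by nra.
have expK : exp u * exp (- u) = 1 by rewrite -exp_plus Rplus_opp_r exp_0.
have := Rmult_le_compat_l _ _ _ (Rlt_le _ _ (exp_pos u)) lower.
have -> : exp u * (g * exp (- u)) = g * (exp u * exp (- u)) by ring.
by rewrite expK; lra.
Qed.

Lemma exp_le (x y : R) : x <= y -> exp x <= exp y.
Proof.
case/Rle_lt_or_eq_dec => [lt_xy | ->]; last exact: Rle_refl.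
exact/Rlt_le/exp_increasing.
Qed.

Fixpoint ghist (Hist : Type) (h0 : Hist) (next : Hist -> bool -> Hist)
  (c : nat -> bool) (k : nat) : Hist :=
  match k with O => h0 | S k' => next (ghist h0 next c k') (c k') end.

Lemma ghist_dep Hist (h0 : Hist) next k c c' :
  (forall i, (i < k)%nat -> c i = c' i) -> ghist h0 next c k = ghist h0 next c' k.
Proof.
elim: k => [|k IH] cc' //=.
by rewrite IH ?cc' // => i lt_ik; apply: cc'; lia.
Qed.

Lemma horizon_spec eps t : 0 < eps -> 0 < t ->
  2 * t / eps ^ 2 < INR (horizon eps t) <= 2 * t / eps ^ 2 + 1.
Proof.
move=> eps_gt0 t_gt0; set x := 2 * t / eps ^ 2.
have x_gt0 : 0 < x by rewrite /x; apply: Rdiv_lt_0_compat; nra.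
have [up_gt up_le] := archimed x.
have -> : INR (horizon eps t) = IZR (up x).
  by rewrite /horizon -/x INR_IZR_INZ Z2Nat.id //; apply: le_IZR; lra.
lra.
Qed.

Lemma horizon_gt0 eps t : 0 < eps -> 0 < t -> (0 < horizon eps t)%nat.
Proof.
move=> eps_gt0 t_gt0; have [hor_gt _] := horizon_spec eps_gt0 t_gt0.
have steps_gt0 : 0 < 2 * t / eps ^ 2 by apply: Rdiv_lt_0_compat; nra.
by apply/ltP/INR_lt; rewrite /=; lra.
Qed.

Lemma before_horizon eps t i : 0 < eps -> 0 < t ->
  (i < (horizon eps t).-1)%nat -> eps ^ 2 * INR i / 2 < t.
Proof.
move=> eps_gt0 t_gt0 lt_i.
have [_ hor_le] := horizon_spec eps_gt0 t_gt0.
have : INR i.+2 <= INR (horizon eps t).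
  by apply/le_INR/leP; have := horizon_gt0 eps_gt0 t_gt0; lia.
rewrite !S_INR => le_i.
have lt_ix : INR i < 2 * t / eps ^ 2 by lra.
have := Rmult_lt_compat_l (eps ^ 2 / 2) _ _ ltac:(nra) lt_ix.
have -> : eps ^ 2 / 2 * (2 * t / eps ^ 2) = t by field; lra.
by have -> : eps ^ 2 * INR i / 2 = eps ^ 2 / 2 * INR i by field.
Qed.

Lemma horizon_long eps t : 0 < eps -> eps < 1 -> 0 < t ->
  2 * t - 1 <= eps ^ 2 * INR (horizon eps t).-1.
Proof.
move=> eps_gt0 eps_lt1 t_gt0; have [hor_gt _] := horizon_spec eps_gt0 t_gt0.
have -> : INR (horizon eps t).-1 = INR (horizon eps t) - 1.
  by rewrite -{2}(prednK (horizon_gt0 eps_gt0 t_gt0)) S_INR; ring.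
have := Rmult_lt_compat_l (eps ^ 2) _ _ ltac:(nra) hor_gt.
have -> : eps ^ 2 * (2 * t / eps ^ 2) = 2 * t by field; lra.
by nra.
Qed.

Definition level (Q : R) : R := 4 * Q + 4.

Lemma level_gt0 Q : 0 <= Q -> 0 < level Q.
Proof. by rewrite /level; lra. Qed.

Section CoinWalk.

Variables (N : nat) (Om : vec N -> Prop) (Q eps : R).
Variables (Hist : Type) (h0 : Hist) (next : Hist -> bool -> Hist).
Variables (pos dir : Hist -> vec N).

Hypothesis Om_bounded : forall x, Om x -> sq x <= Q.
Hypothesis eps_gt0 : 0 < eps.
Hypothesis eps_lt1 : eps < 1.
Hypothesis pos_next :
  forall h b, pos (next h b) = vadd (pos h) (vscale (if b then eps else - eps) (dir h)).
Hypothesis dir_unit : forall h, sq (dir h) = 1.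
Hypothesis start_in : Om (pos h0).

Definition walk (c : nat -> bool) (k : nat) : vec N := pos (ghist h0 next c k).

Definition survives (m : nat) (c : nat -> bool) : Prop :=
  forall i, (i < m)%nat -> Om (walk c i).

Definition potential (m : nat) (c : nat -> bool) : R :=
  indicator (survives m c) * exp (eps ^ 2 * INR m / level Q) * (level Q - sq (walk c m)).

Lemma Q_ge0 : 0 <= Q.
Proof. by apply: Rle_trans (Om_bounded start_in); apply: sq_nonneg. Qed.

Let level_Q_gt0 : 0 < level Q := level_gt0 Q_ge0.

Lemma eps_sq_le1 : eps ^ 2 <= 1.
Proof. by nra. Qed.

(* A surviving walk is at most one step outside Omega. *)
Lemma walk_reach c k : survives k c -> sq (walk c k) <= 2 * Q + 2.
Proof.
case: k => [|k] surv_c.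
  by have := Om_bounded start_in; have := Q_ge0; rewrite /walk /=; lra.
rewrite /walk /= pos_next; apply: Rle_trans (sq_step _ _ _ _) _.
have := Om_bounded (surv_c k (ltnSn k)); rewrite dir_unit /walk.
by have := eps_sq_le1; nra.
Qed.

Lemma walk_upd_before c m s i : (i <= m)%nat -> walk (upd c m s) i = walk c i.
Proof.
move=> le_im; rewrite /walk; congr pos; apply: ghist_dep => k lt_ki.
by rewrite /upd; case: eqP => // eq_k; lia.
Qed.

Lemma walk_upd_step c m s :
  walk (upd c m s) m.+1 =
  vadd (walk c m) (vscale (if s then eps else - eps) (dir (ghist h0 next c m))).
Proof.
rewrite /walk /= pos_next /upd eqxx.
have -> // : ghist h0 next (upd c m s) m = ghist h0 next c m.
by apply: ghist_dep => k lt_km; rewrite /upd; case: eqP => // eq_k; lia.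
Qed.

Lemma survives_upd c m s :
  survives m.+1 (upd c m s) <-> survives m c /\ Om (walk c m).
Proof.
split=> [surv | [surv Om_m] i lt_im1].
  split; last by rewrite -(walk_upd_before c s (leqnn m)); apply: surv.
  by move=> i lt_im; rewrite -(walk_upd_before c s (ltnW lt_im)); apply: surv; lia.
rewrite walk_upd_before; last lia.
by case: (ltnP i m) => [/surv // | le_mi]; have -> : i = m by lia.
Qed.

Lemma potential_ge0 m c : 0 <= potential m c.
Proof.
rewrite /potential; case: (classic (survives m c)) => surv; last first.
  by rewrite indicator_false //; lra.
rewrite indicator_true //; have := walk_reach surv.
have := exp_pos (eps ^ 2 * INR m / level Q); have := Q_ge0; rewrite /level; nra.
Qed.

Lemma potential_super m c :
  / 2 * (potential m.+1 (upd c m true) + potential m.+1 (upd c m false)) <= potential m c.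
Proof.
case: (classic (survives m c /\ Om (walk c m))) => [[surv Om_m] | exits]; last first.
  have dead s : potential m.+1 (upd c m s) = 0.
    by rewrite /potential indicator_false ?Rmult_0_l // => /survives_upd.
  by rewrite !dead; have := potential_ge0 m c; lra.
have alive s : survives m.+1 (upd c m s) by apply/survives_upd.
rewrite /potential !indicator_true //.
rewrite !walk_upd_step S_INR.
set x := walk c m; set w := dir (ghist h0 next c m).
have mean_sq := sq_pm x w eps; rewrite dir_unit in mean_sq.
have expS : exp (eps ^ 2 * (INR m + 1) / level Q) =
            exp (eps ^ 2 * INR m / level Q) * exp (eps ^ 2 / level Q).
  by rewrite -exp_plus; congr exp; field; have := level_Q_gt0; lra.
have drift : exp (eps ^ 2 / level Q) * ((level Q - sq x) - eps ^ 2) <= level Q - sq x.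
  have sq_x_le : sq x <= Q by apply: Om_bounded.
  have := sq_nonneg x; have := Q_ge0; rewrite /level => Q_ge0 sq_x_ge0.
  by apply: exp_drift_le; [exact: level_Q_gt0 | nra | lra | lra].
rewrite expS.
have := Rmult_le_compat_l _ _ _ (Rlt_le _ _ (exp_pos (eps ^ 2 * INR m / level Q))) drift.
by nra.
Qed.

Lemma survival_bound K :
  Ecoin K (fun c => indicator (survives K c)) <= 2 * exp (- (eps ^ 2 * INR K / level Q)).
Proof.
set EK := exp (eps ^ 2 * INR K / level Q).
have EK_gt0 : 0 < EK by apply: exp_pos.
have start : potential 0 (fun _ => false) <= level Q.
  rewrite /potential indicator_true; last by move=> i.
  rewrite /= Rmult_0_r Rdiv_0_l exp_0.
  by have := sq_nonneg (walk (fun _ => false) 0); lra.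
have lower : Ecoin K (fun c => (EK * (level Q / 2)) * indicator (survives K c))
             <= Ecoin K (potential K).
  apply: Ecoin_mono => c; rewrite /potential -/EK.
  case: (classic (survives K c)) => surv; last by rewrite !indicator_false //; lra.
  by rewrite !indicator_true //; have := walk_reach surv; rewrite /level; nra.
rewrite Ecoin_scale in lower.
have := Rle_trans _ _ _ lower
          (Rle_trans _ _ _ (Ecoin_supermartingale potential_super K) start).
rewrite exp_Ropp -/EK => bound.
apply: (Rmult_le_reg_l (EK * (level Q / 2))); first by have := level_Q_gt0; nra.
have -> : EK * (level Q / 2) * (2 * / EK) = level Q by field; lra.
exact: bound.
Qed.

Lemma survives_determined K : determined K (fun c => indicator (survives K c)).
Proof.
move=> c c' cc'; congr indicator; apply: propositional_extensionality.
have same_walk i : (i < K)%nat -> walk c i = walk c' i.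
  by move=> lt_iK; congr pos; apply: ghist_dep => k lt_ki; apply: cc'; lia.
by split=> surv i lt_iK; [rewrite -same_walk | rewrite same_walk] => //; apply: surv.
Qed.

Lemma tail_bound (t : R) (E : (nat -> bool) -> Prop) : 0 < t ->
  (forall c, E c -> forall i, eps ^ 2 * INR i / 2 < t -> Om (walk c i)) ->
  prob_first (horizon eps t) E <= 2 * exp (/ level Q) * exp (- (2 / level Q) * t).
Proof.
move=> t_gt0 E_stays.
set K := (horizon eps t).-1.
have hor_K : horizon eps t = (K + 1)%nat.
  by have := horizon_gt0 eps_gt0 t_gt0; rewrite /K; lia.
have E_survives c : E c -> survives K c.
  by move=> Ec i lt_iK; apply: E_stays => //; apply: before_horizon.
rewrite prob_first_Ecoin.
apply: Rle_trans (Ecoin_mono _ (fun c => indicator_le (E_survives c))) _.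
rewrite hor_K (Ecoin_determined 1 (@survives_determined K)).
apply: Rle_trans (survival_bound K) _.
have -> : 2 * exp (/ level Q) * exp (- (2 / level Q) * t) = 2 * exp (- ((2 * t - 1) / level Q)).
  by rewrite Rmult_assoc -exp_plus; congr (_ * exp _); field; have := level_Q_gt0; lra.
apply: Rmult_le_compat_l; first lra.
apply: exp_le; apply: Ropp_le_contravar.
apply: Rmult_le_compat_r; first by have := level_Q_gt0; move/Rinv_0_lt_compat; lra.
exact: horizon_long.
Qed.

End CoinWalk.

Definition par_step N eps (SI : list (vec N * R) -> (vec N -> Prop))
  (SII : list (vec N * R) -> (vec N -> Prop) -> vec N) (x0 : vec N) (t : R)
  (h : list (vec N * R)) (b : bool) : list (vec N * R) :=
  (vadd (head (x0, t) h).1 (vscale (if b then eps else - eps) (SII h (SI h))),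
   (head (x0, t) h).2 - eps ^ 2 / 2) :: h.

Definition ell_step N eps (SI : list (vec N) -> (vec N -> Prop))
  (SII : list (vec N) -> (vec N -> Prop) -> vec N) (x0 : vec N)
  (h : list (vec N)) (b : bool) : list (vec N) :=
  vadd (head x0 h) (vscale (if b then eps else - eps) (SII h (SI h))) :: h.

Lemma par_hist_ghist N eps SI SII (x0 : vec N) t c k :
  par_hist eps SI SII x0 t c k = ghist [:: (x0, t)] (par_step eps SI SII x0 t) c k.
Proof. by elim: k => //= k ->. Qed.

Lemma ell_hist_ghist N eps SI SII (x0 : vec N) c k :
  ell_hist eps SI SII x0 c k = ghist [:: x0] (ell_step eps SI SII x0) c k.
Proof. by elim: k => //= k ->. Qed.

Lemma par_time N eps SI SII (x0 : vec N) t c k :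
  (par_state eps SI SII x0 t c k).2 = t - INR k * eps ^ 2 / 2.
Proof.
rewrite /par_state; elim: k => [|k IH]; first by rewrite /=; field.
by rewrite S_INR [LHS]/= IH; field.
Qed.

Lemma valid_dir_unit N j (H : Type) SI (SII : list H -> (vec N -> Prop) -> vec N) :
  valid_strategies j SI SII -> forall h, sq (SII h (SI h)) = 1.
Proof.
move=> [SI_sub SII_unit] h; have [_ unit] := SII_unit h (SI h) (SI_sub h).
by rewrite -vnorm_sq unit /=; ring.
Qed.

Theorem lemma3p6 (N j : nat) (Omega : vec N -> Prop) :
  bounded_domain Omega -> (1 <= j)%nat -> (j <= N)%nat ->
  exists mu C : R, 0 < mu /\ 0 < C /\
  forall (eps : R) (x0 : vec N) (t : R),
    0 < eps -> eps < 1 -> Omega x0 -> 0 < t ->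
    (forall (SI : list (vec N * R) -> (vec N -> Prop))
            (SII : list (vec N * R) -> (vec N -> Prop) -> vec N),
        valid_strategies j SI SII ->
        prob_first (horizon eps t) (par_time_out Omega eps SI SII x0 t)
          <= C * exp (- mu * t)) /\
    (forall (SI : list (vec N) -> (vec N -> Prop))
            (SII : list (vec N) -> (vec N -> Prop) -> vec N),
        valid_strategies j SI SII ->
        prob_first (horizon eps t) (ell_long Omega eps SI SII x0 t)
          <= C * exp (- mu * t)).
Proof.
move=> [_ [_ [_ [M norm_le_M]]]] _ _.
have Om_sq x : Omega x -> sq x <= M ^ 2.
  move=> Om_x; rewrite -vnorm_sq; apply: pow_incr; split; first exact: sqrt_pos.
  exact: norm_le_M.
have A_gt0 : 0 < level (M ^ 2) by apply/level_gt0/pow2_ge_0.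
exists (2 / level (M ^ 2)), (2 * exp (/ level (M ^ 2))); split.
  by apply: Rdiv_lt_0_compat; lra.
split; first by apply: Rmult_lt_0_compat; [lra | apply: exp_pos].
move=> eps x0 t eps_gt0 eps_lt1 Om_x0 t_gt0; split=> SI SII valid.
- apply: (tail_bound (h0 := [:: (x0, t)]) (next := par_step eps SI SII x0 t)
            (pos := fun h => (head (x0, t) h).1) Om_sq eps_gt0 eps_lt1 _
            (valid_dir_unit valid)) => // c par_c i before_t.
  have := par_c i; rewrite par_time /par_state par_hist_ghist; apply; lra.
- apply: (tail_bound (h0 := [:: x0]) (next := ell_step eps SI SII x0)
            (pos := head x0) Om_sq eps_gt0 eps_lt1 _ (valid_dir_unit valid)) => // c ell_c i before_t.
  by have := ell_c i before_t; rewrite /ell_pos ell_hist_ghist.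
Qed.
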